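(* Let $\mathfrak L$ be a left-resolving $\lambda$-graph system presenting a subshift $\Lambda$, with vertex sets $V_l=\{v_1^l,\dots,v_{m(l)}^l\}$. Consider: (i) $\mathfrak L$ satisfies condition (I); (ii) for every $l\in\mathbb Z_{\ge0}$, $v\in V_l$, $(x_n)_{n\in\mathbb N}\in\Gamma^+_\infty(v)$ and $m\in\mathbb N$ there is $(y_n)_{n\in\mathbb N}\in\Gamma^+_\infty(v)$ with $x_j=y_j$ for $j=1,\dots,m$ and $x_N\neq y_N$ for some $N>m$; (iii) for all $k,l\in\mathbb N$ with $k\le l$ there exist $y(i)\in\Gamma^+_\infty(v_i^l)$, $i=1,\dots,m(l)$, such that $\sigma_\Lambda^n(y(i))\neq y(j)$ for all $i,j=1,\dots,m(l)$ and $n=1,\dots,k$. Then (i) $\Leftrightarrow$ (ii) $\Rightarrow$ (iii). If moreover $\mathfrak L$ is the minimal presentation $\mathfrak L_\Lambda^{\min}$ of a normal subshift $\Lambda$, then (i), (ii), (iii) are all equivalent.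
   Context: A $\lambda$-graph system over a finite alphabet $\Sigma$ is $\mathfrak L=(V,E,\lambda,\iota)$ where $V=\bigsqcup_{l\ge0}V_l$ with $V_l$ finite, $E=\bigsqcup_{l\ge0}E_{l,l+1}$ with each $e\in E_{l,l+1}$ having source $s(e)\in V_l$ and terminal $t(e)\in V_{l+1}$, $\lambda:E\to\Sigma$ a labeling, $\iota:V_{l+1}\to V_l$ surjections, every vertex has an outgoing edge and every vertex of $V_{l+1}$ an incoming edge, and (local property) for $u\in V_{l-1}$, $v\in V_{l+1}$ there is a label-preserving bijection between $\{e\in E_{l,l+1}:t(e)=v,\ \iota(s(e))=u\}$ and $\{e\in E_{l-1,l}:s(e)=u,\ t(e)=\iota(v)\}$. It is left-resolving if $t(e)=t(f)$, $\lambda(e)=\lambda(f)$ imply $e=f$. The presented subshift $\Lambda$ has as admissible words the labels of finite paths; $X_\Lambda$ is its right one-sided subshift with shift $\sigma_\Lambda$. For $v\in V_l$, $\Gamma^+_\infty(v)=\{(\lambda(e_1),\lambda(e_2),\dots):s(e_1)=v,\ e_i\in E_{l+i-1,l+i},\ t(e_i)=s(e_{i+1})\}\subset X_\Lambda$. $\mathfrak L$ satisfies condition (I) if $\Gamma^+_\infty(v)$ contains at least two distinct sequences for every vertex $v$. For subshifts: $\Gamma_l^-(\mu)=\{\nu\in B_l(\Lambda):\nu\mu\in B_*(\Lambda)\}$, $\Gamma_*^+(\mu)=\{\nu:\mu\nu\in B_*(\Lambda)\}$; $\mu$ is $l$-synchronizing if $\Gamma_l^-(\mu)=\Gamma_l^-(\mu\omega)$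 for all $\omega\in\Gamma_*^+(\mu)$, $S_l(\Lambda)$ the set of these; $\mu\sim_l\nu$ iff $\Gamma_l^-(\mu)=\Gamma_l^-(\nu)$. $\Lambda$ is normal if irreducible, infinite, and for every $\eta\in B_l(\Lambda)$ and $k>l$ there is $\nu\in S_k(\Lambda)$ with $\eta\nu\in S_{k-l}(\Lambda)$. The minimal presentation $\mathfrak L_\Lambda^{\min}$ has $V_0$ a singleton, $V_l=S_l(\Lambda)/\!\sim_l$, an edge labeled $\alpha$ from $[\alpha\nu]_l$ to $[\nu]_{l+1}$ for $\nu\in S_{l+1}(\Lambda)$ with $\alpha\nu\in B_*(\Lambda)$, and $\iota([\nu]_{l+1})=[\nu]_l$. *)

From HB Require Import structures.
From mathcomp Require Import all_boot all_order all_algebra.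
Set Implicit Arguments. Unset Strict Implicit. Unset Printing Implicit Defensive.

(* V l = V_l, E l = E_{l,l+1}; src : E l -> V l, trg : E l -> V (l+1) *)
Unset Implicit Arguments.
Record lgraph_system (S : finType) := LGraphSystem {
  V : nat -> finType;
  E : nat -> finType;
  src : forall l, E l -> V l;
  trg : forall l, E l -> V l.+1;
  lab : forall l, E l -> S;
  iota : forall l, V l.+1 -> V l;
  iota_surj : forall l (u : V l), exists v : V l.+1, iota l v = u;
  has_out : forall l (v : V l), exists e : E l, src l e = v;
  has_in : forall l (v : V l.+1), exists e : E l, trg l e = v;
  (* local property, for u in V_{l-1}, v in V_{l+1}, written with l := l+1 *)
  local_prop : forall l (u : V l) (v : V l.+2),
    exists f : {e : E l.+1 | (trg l.+1 e == v) && (iota l (src l.+1 e) == u)} ->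
               {e : E l | (src l e == u) && (trg l e == iota l.+1 v)},
      bijective f /\ forall e, lab l (proj1_sig (f e)) = lab l.+1 (proj1_sig e)
}.

Set Implicit Arguments.
Arguments V {S} L l : rename.
Arguments E {S} L l : rename.
Arguments src {S L l} e : rename.
Arguments trg {S L l} e : rename.
Arguments lab {S L l} e : rename.
Arguments iota {S L l} v : rename.

Definition left_resolving (S : finType) (L : lgraph_system S) : Prop :=
  forall l (e f : E L l), trg e = trg f -> lab e = lab f -> e = f.

(* One-sided sequences (x_1, x_2, ...) are functions nat -> S, with
   x_n stored at index n-1. *)
Definition shift1 (S : Type) (x : nat -> S) : nat -> S := fun n => x n.+1.

(* Gamma^+_infty(v): labels of infinite paths e_1 e_2 ... with s(e_1) = v,
   e_i in E_{l+i-1,l+i} (here: e i : E (i + l)). *)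
Definition Gamma_inf (S : finType) (L : lgraph_system S) (l : nat) (v : V L l)
    (x : nat -> S) : Prop :=
  exists e : forall i, E L (i + l),
    [/\ src (e 0) = v,
        forall i, trg (e i) = src (e i.+1)
      & forall i, x i = lab (e i)].

Definition condI (S : finType) (L : lgraph_system S) : Prop :=
  forall l (v : V L l), exists x y, [/\ Gamma_inf v x, Gamma_inf v y & x <> y].

Definition zseq (S : Type) := int -> S.

Definition shiftZ (S : Type) (x : zseq S) : zseq S := fun i => x (i + 1)%R.

Definition block (S : Type) (x : zseq S) (i : int) (n : nat) : seq S :=
  mkseq (fun k => x (i + k%:Z)%R) n.

Definition inB (S : Type) (X : zseq S -> Prop) (w : seq S) : Prop :=
  exists x i, X x /\ block x i (size w) = w.

Definition is_subshift (S : Type) (X : zseq S -> Prop) : Prop :=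
  [/\ forall x, X x -> X (shiftZ x),
      forall x, X x -> exists y, X y /\ shiftZ y = x
    & forall x, (forall i n, inB X (block x i n)) -> X x].

Definition sim_l (S : Type) (X : zseq S -> Prop) (l : nat) (mu mu' : seq S) : Prop :=
  forall nu, size nu = l -> (inB X (nu ++ mu) <-> inB X (nu ++ mu')).

Definition lsync (S : Type) (X : zseq S -> Prop) (l : nat) (mu : seq S) : Prop :=
  inB X mu /\ forall om, inB X (mu ++ om) -> sim_l X l mu (mu ++ om).

Definition irreducible (S : Type) (X : zseq S -> Prop) : Prop :=
  forall u w, inB X u -> inB X w -> exists v, inB X (u ++ v ++ w).

Definition infinite_set (T : Type) (X : T -> Prop) : Prop :=
  ~ exists (n : nat) (f : 'I_n -> T), forall x, X x -> exists i, x = f i.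

Definition normal (S : Type) (X : zseq S -> Prop) : Prop :=
  [/\ irreducible X, infinite_set X &
      forall (l : nat) (eta : seq S), size eta = l -> inB X eta ->
        forall k, l < k -> exists nu, lsync X k nu /\ lsync X (k - l) (eta ++ nu)].

(* L is (isomorphic to) the minimal presentation L_Lambda^min:
   c l maps words of S_l(Lambda) onto V_l, inducing V_l = S_l/~_l;
   iota([nu]_{l+1}) = [nu]_l; edges are exactly the edges labeled alpha from
   [alpha nu]_l to [nu]_{l+1} (nu in S_{l+1}, alpha nu in B_star), one for each
   such (source, label, target). *)
Definition is_min_presentation (S : finType) (X : zseq S -> Prop)
    (L : lgraph_system S) : Prop :=
  exists c : forall l, seq S -> V L l,
  [/\ (forall l mu nu, lsync X l mu -> lsync X l nu ->
        (c l mu = c l nu <-> sim_l X l mu nu)) /\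
      (forall l (v : V L l), exists mu, lsync X l mu /\ c l mu = v),
      forall l nu, lsync X l.+1 nu -> iota (c l.+1 nu) = c l nu,
      forall l (e : E L l), exists alpha nu,
        [/\ lsync X l.+1 nu, inB X (alpha :: nu), lab e = alpha,
            src e = c l (alpha :: nu) & trg e = c l.+1 nu],
      forall l alpha nu, lsync X l.+1 nu -> inB X (alpha :: nu) ->
        exists e : E L l,
        [/\ lab e = alpha, src e = c l (alpha :: nu) & trg e = c l.+1 nu]
    & forall l (e f : E L l), src e = src f -> trg e = trg f -> lab e = lab f ->
        e = f].

(* (i) <-> (ii): condition (ii) says that each Gamma^+_oo(v) has no isolated point, and
   this follows at depth m from condition (I) at the vertex reached after m steps.
   (ii) -> (iii): choose the sequences y(v) one vertex at a time; in a perfect set one can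
   always avoid finitely many forbidden sequences, and the shift relations with the
   previously chosen y(w) (and with y(v) itself, i.e. periodicity) forbid finitely many.
   Normal and minimal -> (i): a vertex is the class of an l-synchronizing word mu; every
   admissible extension of mu extends, by gluing ever more synchronizing words, to an
   infinite path from that vertex.  If two extensions of mu of equal length differ we get
   two sequences in Gamma^+_oo(v); otherwise the future of mu is unique, irreducibility
   makes every point periodic with one period, and the subshift would be finite. *)

From HB Require Import structures.
From mathcomp Require Import all_boot all_order all_algebra zify.
From Stdlib Require Import FunctionalExtensionality IndefiniteDescription Classical.
Set Implicit Arguments. Unset Strict Implicit. Unset Printing Implicit Defensive.
Import GRing.Theory Num.Theory.

Section Words.
Variables (S : eqType) (X : zseq S -> Prop).

Lemma blockD (x : zseq S) i m n :
  block x i (m + n) = block x i m ++ block x (i + m%:Z)%R n.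
Proof.
rewrite /block /mkseq iotaD map_cat add0n; congr (_ ++ _).
rewrite -[m in iota m](addn0 m) iotaDl -map_comp; apply: eq_map => k /=.
by rewrite PoszD addrA.
Qed.

Lemma inB_block x i n : X x -> inB X (block x i n).
Proof. by exists x, i; rewrite size_mkseq. Qed.

Lemma inB_catl u w : inB X (u ++ w) -> inB X u.
Proof.
move=> [x [i [Xx]]]; rewrite size_cat blockD => /eqP.
by rewrite eqseq_cat ?size_mkseq // => /andP[/eqP uE _]; exists x, i.
Qed.

Lemma inB_catr u w : inB X (u ++ w) -> inB X w.
Proof.
move=> [x [i [Xx]]]; rewrite size_cat blockD => /eqP.
by rewrite eqseq_cat ?size_mkseq // => /andP[_ /eqP wE]; exists x, (i + (size u)%:Z)%R.
Qed.

Lemma inB_extr w n : inB X w -> exists2 om, size om = n & inB X (w ++ om).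
Proof.
move=> [x [i [Xx wE]]]; exists (block x (i + (size w)%:Z)%R n); first exact: size_mkseq.
by exists x, i; rewrite size_cat size_mkseq blockD wE.
Qed.

Lemma inB_extl w n : inB X w -> exists2 g, size g = n & inB X (g ++ w).
Proof.
move=> [x [i [Xx wE]]]; exists (block x (i - n%:Z)%R n); first exact: size_mkseq.
by exists x, (i - n%:Z)%R; rewrite size_cat size_mkseq blockD subrK wE.
Qed.

Lemma sim_l_sym l u w : sim_l X l u w -> sim_l X l w u.
Proof. by move=> uw nu nuE; rewrite (uw nu nuE). Qed.

Lemma sim_l_trans l u w t : sim_l X l u w -> sim_l X l w t -> sim_l X l u t.
Proof. by move=> uw wt nu nuE; rewrite (uw nu nuE) (wt nu nuE). Qed.

Lemma lsync_catr l mu om : lsync X l mu -> inB X (mu ++ om) -> lsync X l (mu ++ om).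
Proof.
move=> [mu_in mu_sync] muom; split=> // om' muom'.
apply: sim_l_trans (sim_l_sym (mu_sync om muom)) _.
by rewrite -catA; apply: mu_sync; rewrite catA.
Qed.

Lemma lsync_catl l l' b nu :
  lsync X l nu -> inB X (b ++ nu) -> l' + size b <= l -> lsync X l' (b ++ nu).
Proof.
move=> [_ nu_sync] bnu le_l; split=> // om bnuom g gE; split; last first.
  by rewrite !catA => /inB_catl; rewrite -!catA.
move=> /(inB_extl (l - (l' + size b))) [h hE hgbnu].
have nuom : inB X (nu ++ om) by move: bnuom; rewrite -catA => /inB_catr.
have hgbE : size (h ++ g ++ b) = l by rewrite !size_cat hE gE subnK.
have [to_ext _] := nu_sync om nuom _ hgbE.
by move: to_ext; rewrite -!catA => /(_ hgbnu) /inB_catr.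
Qed.

Lemma lsync_le l l' nu : lsync X l nu -> l' <= l -> lsync X l' nu.
Proof.
by move=> nu_sync le_l; apply: (@lsync_catl l l' [::]); rewrite ?addn0 //; case: nu_sync.
Qed.

End Words.

Section Paths.
Variables (S : finType) (L : lgraph_system S).

(* The i-th edge of a path in [Gamma_inf] lives in [E L (i + l)], and [i + l.+1] is not
   convertible to [i.+1 + l]: shifting a path by one edge needs these casts. *)
Definition castV a b (h : a = b) (v : V L a) : V L b := eq_rect a (V L) v b h.
Definition castE a b (h : a = b) (e : E L a) : E L b := eq_rect a (E L) e b h.

Lemma castV_id a (h : a = a) (v : V L a) : castV h v = v.
Proof. by rewrite (eq_irrelevance h erefl). Qed.

Lemma castV_irr a b (h h' : a = b) (v : V L a) : castV h v = castV h' v.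
Proof. by rewrite (eq_irrelevance h h'). Qed.

Lemma src_castE a b (h : a = b) (e : E L a) : src (castE h e) = castV h (src e).
Proof. by case: b / h. Qed.

Lemma trg_castE a b (h : a = b) (e : E L a) :
  trg (castE h e) = castV (congr1 succn h) (trg e).
Proof. by case: b / h. Qed.

Lemma lab_castE a b (h : a = b) (e : E L a) : lab (castE h e) = lab e.
Proof. by case: b / h. Qed.

Definition scons (a : S) (x : nat -> S) : nat -> S :=
  fun i => if i is j.+1 then x j else a.

Lemma Gamma_cons l (e0 : E L l) x :
  Gamma_inf (trg e0) x -> Gamma_inf (src e0) (scons (lab e0) x).
Proof.
move=> [g [g0 gS gx]].
pose f i : E L (i + l) := if i is j.+1 then castE (addnS j l) (g j) else e0.
exists f; split=> // [[|j] | [|j]] //=; rewrite ?lab_castE //.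
  by rewrite src_castE g0 castV_id.
by rewrite trg_castE src_castE -gS; apply: castV_irr.
Qed.

Lemma Gamma_uncons l (v : V L l) x :
  Gamma_inf v x ->
  exists2 e0 : E L l, src e0 = v & lab e0 = x 0 /\ Gamma_inf (trg e0) (shift1 x).
Proof.
move=> [e [e0 eS ex]]; exists (e 0) => //; split=> //.
exists (fun j => castE (esym (addnS j l)) (e j.+1)); split.
- by rewrite src_castE -(eS 0) castV_id.
- by move=> j; rewrite trg_castE src_castE -(eS j.+1); apply: castV_irr.
- by move=> j; rewrite lab_castE /shift1 ex.
Qed.

Lemma Gamma_inf_nonempty l (v : V L l) : exists x, Gamma_inf v x.
Proof.
pose out n (u : V L n) :=
  sval (constructive_indefinite_description _ (@has_out _ L n u)).
have outP n (u : V L n) : src (out n u) = u.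
  by rewrite /out; case: constructive_indefinite_description.
pose fix p i : E L (i + l) := if i is j.+1 then out _ (trg (p j)) else out _ v.
by exists (fun i => lab (p i)), p; split=> // [|i]; rewrite /= outP.
Qed.

End Paths.

Section PerfectSets.
Variable S : Type.

Definition agree (m : nat) (x y : nat -> S) : Prop := forall j, j < m -> x j = y j.

(* Condition (ii) says exactly that every [Gamma_inf v] is [perfect]. *)
Definition perfect (G : (nat -> S) -> Prop) : Prop :=
  forall x, G x -> forall m, exists y, [/\ G y, agree m x y & y <> x].

Lemma agree_le m m' x y : agree m x y -> m' <= m -> agree m' x y.
Proof. by move=> xy le_m j lt_j; apply: xy; apply: leq_trans le_m. Qed.

Lemma agree_sym m x y : agree m x y -> agree m y x.
Proof. by move=> xy j /xy. Qed.

Lemma neq_seqP (x y : nat -> S) : x <> y -> exists d, x d <> y d.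
Proof.
move=> neq_xy; apply: NNPP => all_eq; apply: neq_xy.
by apply: functional_extensionality => d; apply: NNPP => neq_d; apply: all_eq; exists d.
Qed.

Lemma agree_separates (I : eqType) (r : seq I) (F : I -> nat -> S) x M :
  exists2 M', M <= M' & forall i, i \in r -> agree M' (F i) x -> F i = x.
Proof.
elim: r => [|i0 r [M' le_M sepM']]; first by exists M.
case: (classic (F i0 = x)) => [Fi0x | /neq_seqP [d neq_d]].
  by exists M' => // i; rewrite inE => /orP[/eqP-> | /sepM'] //.
exists (maxn M' d.+1) => [|i]; first by rewrite leq_max le_M.
rewrite inE => /orP[/eqP-> /(_ d) | /sepM' sep /agree_le]; last first.
  by move=> agr; apply/sep/agr; rewrite leq_maxl.
by move=> agr; case: neq_d; apply: agr; rewrite leq_max ltnSn orbT.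
Qed.

Lemma perfect_avoid G (I : eqType) (r : seq I) (F : I -> nat -> S) x M :
  perfect G -> G x ->
  exists y, [/\ G y, agree M x y & forall i, i \in r -> y <> F i].
Proof.
move=> perfG Gx; have [M' le_M sepM'] := agree_separates r F x M.
have [y [Gy xy neq_yx]] := perfG x Gx M'.
exists y; split=> [||i /sepM' sep yFi] //; first exact: agree_le le_M.
by apply: neq_yx; rewrite yFi sep // -yFi; apply: agree_sym.
Qed.

Lemma iter_shift1 n (y : nat -> S) j : iter n (@shift1 S) y j = y (n + j).
Proof. by elim: n j => [|n IH] j //=; rewrite /shift1 IH addnS. Qed.

Definition prepend n (u x : nat -> S) : nat -> S :=
  fun j => if j < n then u j else x (j - n).

Definition periodize n (u : nat -> S) : nat -> S := fun j => u (j %% n).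

Lemma eq_prepend n u z : agree n u z -> z = prepend n u (iter n (@shift1 S) z).
Proof.
move=> uz; apply: functional_extensionality => j; rewrite /prepend iter_shift1.
by case: ltnP => [/uz // | /subnKC ->].
Qed.

Lemma eq_periodize n u z :
  0 < n -> agree n u z -> iter n (@shift1 S) z = z -> z = periodize n u.
Proof.
move=> n_gt0 uz zper; apply: functional_extensionality => j.
rewrite /periodize uz ?ltn_mod //.
rewrite {1}(divn_eq j n); elim: (j %/ n) => [|q IH]; first by rewrite mul0n add0n.
by rewrite mulSn -addnA -iter_shift1 zper.
Qed.

End PerfectSets.

Section ShiftFreeChoice.
Variables (S : Type) (T : eqType) (G : T -> (nat -> S) -> Prop).
Hypotheses (G_nonempty : forall v, exists x, G v x) (G_perfect : forall v, perfect (G v)).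

Definition shift_free k (s : seq T) (y : T -> nat -> S) : Prop :=
  forall v w n, v \in s -> w \in s -> 0 < n -> n <= k -> iter n (@shift1 S) (y v) <> y w.

(* The new value [z] at [v0] only has to avoid finitely many sequences, indexed by
   [(n, (None, _))], [(n, (Some w, true))] and [(n, (Some w, false))]. *)
Lemma perfect_shift_free k s :
  exists y : T -> nat -> S, (forall v, G v (y v)) /\ shift_free k s y.
Proof.
elim: s => [|v0 s [y [Gy yfree]]].
  have /functional_choice [y Gy] := G_nonempty.
  by exists y; split=> // v w n.
pose x0 := y v0.
pose F (i : nat * (option T * bool)) : nat -> S :=
  match i with
  | (n, (None, _)) => periodize n x0
  | (n, (Some w, true)) => prepend n x0 (y w)
  | (n, (Some w, false)) => iter n (@shift1 S) (y w)
  end.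
pose r := [seq (n, p) | n <- iota 1 k,
             p <- [seq (o, b) | o <- None :: map Some s, b <- [:: true; false]]].
have r_mem n o b : 0 < n -> n <= k -> o \in None :: map Some s -> (n, (o, b)) \in r.
  move=> n_gt0 le_nk o_in; apply: allpairs_f; first by rewrite mem_iota add1n ltnS n_gt0.
  by apply: allpairs_f => //; case: b; rewrite !inE.
have [z [Gz x0z avoid]] := perfect_avoid r F k (@G_perfect v0) (Gy v0).
exists (fun v => if v == v0 then z else y v); split=> [v | v w n].
  by case: eqP => [-> |].
rewrite !inE => vin win n_gt0 le_nk; have agr := agree_le x0z le_nk.
case: eqP vin => [_ _ | _ /= vin]; case: eqP win => [_ _ | _ /= win].
- move=> /(eq_periodize n_gt0 agr); apply: avoid (n, (None, true)) _.
  exact: r_mem.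
- move=> zshift; apply: (avoid (n, (Some w, true))).
    by apply: r_mem; rewrite // inE map_f.
  by rewrite /= -zshift; apply: eq_prepend.
- by apply/nesym/(avoid (n, (Some v, false))); apply: r_mem; rewrite // inE map_f.
- exact: yfree.
Qed.

End ShiftFreeChoice.

Lemma perfectP (S : Type) (G : (nat -> S) -> Prop) :
  perfect G <-> forall x, G x -> forall m, 0 < m ->
    exists y, [/\ G y, agree m x y & exists N, m <= N /\ x N <> y N].
Proof.
split=> [perfG x Gx m _ | split_late x Gx m].
  have [y [Gy xy /nesym/neq_seqP [N neq_N]]] := perfG x Gx m.
  exists y; split=> //; exists N; split=> //; rewrite leqNgt.
  by apply/negP => /xy.
have [y [Gy xy [N [_ neq_N]]]] := split_late x Gx m.+1 isT.
by exists y; split=> [||yx] //; [apply: agree_le xy _ | apply: neq_N; rewrite yx].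
Qed.

Section ConditionI.
Variables (S : finType) (L : lgraph_system S).

Lemma condI_perfect : condI L -> forall l (v : V L l), perfect (Gamma_inf v).
Proof.
move=> HI l v x Gx m; elim: m l v x Gx => [|m IH] l v x Gx.
  have [y1 [y2 [G1 G2 neq12]]] := HI l v.
  case: (classic (y1 = x)) => [y1x | ?]; [exists y2 | exists y1] => //.
  by split=> //; congruence.
have [e0 <- [e0x Gtl]] := Gamma_uncons Gx.
have [y [Gy agr neq_yx]] := IH _ _ _ Gtl.
exists (scons (lab e0) y); split; first exact: Gamma_cons.
  by case=> [|j] //= /agr.
by move=> yx; apply: neq_yx; apply: functional_extensionality => j; rewrite -yx.
Qed.

Lemma perfect_condI : (forall l (v : V L l), perfect (Gamma_inf v)) -> condI L.
Proof.
move=> perfG l v; have [x Gx] := Gamma_inf_nonempty v.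
by have [y [Gy _ neq_yx]] := perfG l v x Gx 0; exists x, y; split=> // /esym.
Qed.

End ConditionI.

Lemma drop_catl (T : Type) i (s1 s2 : seq T) :
  i <= size s1 -> drop i (s1 ++ s2) = drop i s1 ++ s2.
Proof.
rewrite drop_cat leq_eqVlt => /orP[/eqP-> | ->] //.
by rewrite ltnn subnn drop0 drop_size.
Qed.

(* [U] grows by ever more synchronizing words [F j], so that each tail [chain_word i]
   stays (i + l)-synchronizing and names a vertex of V_(i+l). *)
Section SyncChain.
Variables (S : eqType) (X : zseq S -> Prop) (l : nat) (U F : nat -> seq S).
Hypotheses (U_S : forall j, U j.+1 = U j ++ F j) (F_nonempty : forall j, 0 < size (F j)).
Hypotheses (U_in : forall j, inB X (U j))
  (F_sync : forall j, lsync X (l + size (U j)) (F j)).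

Lemma size_chain j : size (U 0) + j <= size (U j).
Proof.
elim: j => [|j IH]; first by rewrite addn0.
by rewrite U_S size_cat; have := F_nonempty j; lia.
Qed.

Lemma prefix_chain j : exists t, U j = U 0 ++ t.
Proof.
elim: j => [|j [t Ut]]; first by exists [::]; rewrite cats0.
by exists (t ++ F j); rewrite U_S Ut catA.
Qed.

Definition chain_word i := drop i (U i.+1).
Definition chain_letter a0 i := nth a0 (U i.+1) i.

Lemma chain_word_sync i : lsync X (i + l) (chain_word i).
Proof.
have le_i : i <= size (U i) by have := size_chain i; lia.
have Ui_in : inB X (drop i (U i) ++ F i).
  by move: (U_in i.+1); rewrite U_S -{1}(cat_take_drop i (U i)) -catA => /inB_catr.
rewrite /chain_word U_S drop_catl //; apply: lsync_catl (F_sync i) Ui_in _.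
by rewrite size_drop addnAC subnKC // addnC.
Qed.

Lemma chain_letter_word a0 i :
  chain_letter a0 i :: chain_word i.+1 = chain_word i ++ F i.+1.
Proof.
have lt_i : i < size (U i.+1) by have := size_chain i.+1; lia.
rewrite /chain_word -drop_catl ?(ltnW lt_i) // -U_S (drop_nth a0 (n := i)).
  by rewrite /chain_letter [U i.+2]U_S nth_cat lt_i.
by rewrite U_S size_cat ltn_addr.
Qed.

Lemma chain_letter_word_in a0 i : inB X (chain_letter a0 i :: chain_word i.+1).
Proof.
have le_i : i <= size (U i.+1) by have := size_chain i.+1; lia.
rewrite chain_letter_word /chain_word -drop_catl // -U_S.
by move: (U_in i.+2); rewrite -{1}(cat_take_drop i (U i.+2)) => /inB_catr.
Qed.

Lemma chain_letter0 a0 j : j < size (U 0) -> chain_letter a0 j = nth a0 (U 0) j.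
Proof.
move=> lt_j; rewrite /chain_letter.
by have [t ->] := prefix_chain j.+1; rewrite nth_cat lt_j.
Qed.

End SyncChain.

Section NormalSubshift.
Variables (S : eqType) (X : zseq S -> Prop).
Hypothesis X_normal : normal X.

Lemma normal_sync_ext u k : inB X u ->
  exists nu, [/\ 0 < size nu, lsync X k nu & inB X (u ++ nu)].
Proof.
move=> u_in; have [_ _ sync_ext] := X_normal.
have [|nu [nu_sync [unu_in _]]] := sync_ext _ u erefl u_in (maxn k (size u).+1).
  by rewrite leq_max ltnSn orbT.
have [a a1 unua_in] := inB_extr 1 unu_in.
exists (nu ++ a); split; first by rewrite size_cat a1 addn1.
  apply: lsync_le (leq_maxl k (size u).+1); apply: lsync_catr nu_sync _.
  by move: unua_in; rewrite -catA => /inB_catr.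
by rewrite catA.
Qed.

Lemma normal_sync_chain l u0 : inB X u0 ->
  exists U F : nat -> seq S, [/\ U 0 = u0, forall j, U j.+1 = U j ++ F j,
    forall j, 0 < size (F j), forall j, inB X (U j)
  & forall j, lsync X (l + size (U j)) (F j)].
Proof.
move=> u0_in.
have /functional_choice [ext extP] : forall u, exists nu, inB X u ->
    [/\ 0 < size nu, lsync X (l + size u) nu & inB X (u ++ nu)].
  move=> u; case: (classic (inB X u)) => [/(normal_sync_ext (l + size u)) [nu ?] | ?].
    by exists nu.
  by exists [::].
pose fix U j := if j is i.+1 then U i ++ ext (U i) else u0.
have U_in j : inB X (U j) by elim: j => [|j IH] //; case: (extP _ IH).
exists U, (fun j => ext (U j)); split=> // j; by case: (extP _ (U_in j)).
Qed.

End NormalSubshift.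

Section MinimalPresentation.
Variables (S : finType) (X : zseq S -> Prop) (L : lgraph_system S).
Variable c : forall l, seq S -> V L l.
Hypothesis c_sim : forall l mu nu, lsync X l mu -> lsync X l nu ->
  (c l mu = c l nu <-> sim_l X l mu nu).
Hypothesis c_edge : forall l alpha nu, lsync X l.+1 nu -> inB X (alpha :: nu) ->
  exists e : E L l, [/\ lab e = alpha, src e = c l (alpha :: nu) & trg e = c l.+1 nu].

Lemma c_catr l mu om : lsync X l mu -> inB X (mu ++ om) -> c l (mu ++ om) = c l mu.
Proof.
move=> mu_sync muom; apply/c_sim => //; first exact: lsync_catr.
by apply: sim_l_sym; case: mu_sync => _; apply.
Qed.

Lemma Gamma_inf_sync_words l (w t : nat -> seq S) (x : nat -> S) :
  (forall i, lsync X (i + l) (w i)) -> (forall i, x i :: w i.+1 = w i ++ t i) ->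
  (forall i, inB X (x i :: w i.+1)) -> Gamma_inf (c l (w 0)) x.
Proof.
move=> w_sync w_step w_in.
have src_eq i : c (i + l) (x i :: w i.+1) = c (i + l) (w i).
  by rewrite w_step c_catr // -w_step.
pose e i := sval (constructive_indefinite_description _ (c_edge (w_sync i.+1) (w_in i))).
have eP i : [/\ lab (e i) = x i, src (e i) = c (i + l) (x i :: w i.+1)
              & trg (e i) = c (i + l).+1 (w i.+1)].
  by rewrite /e; case: constructive_indefinite_description.
exists e; split=> [|i|i]; first by case: (eP 0) => _ -> _; apply: src_eq.
  by case: (eP i) => _ _ ->; case: (eP i.+1) => _ -> _; rewrite src_eq.
by case: (eP i).
Qed.

Lemma normal_Gamma_inf_ext a0 l mu om :
  normal X -> lsync X l mu -> inB X (mu ++ om) ->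
  exists2 x, Gamma_inf (c l mu) x &
    forall j, j < size (mu ++ om) -> x j = nth a0 (mu ++ om) j.
Proof.
move=> X_normal mu_sync muom.
have [U [F [U0 U_S F_nonempty U_in F_sync]]] := normal_sync_chain X_normal l muom.
exists (chain_letter U a0) => [|j]; last by rewrite -U0; apply: (chain_letter0 (S := S)).
have := Gamma_inf_sync_words (chain_word_sync U_S F_nonempty U_in F_sync)
  (chain_letter_word U_S F_nonempty a0) (chain_letter_word_in U_S F_nonempty U_in a0).
by rewrite /chain_word drop0 U_S U0 -catA c_catr // catA -U0 -U_S.
Qed.

End MinimalPresentation.

Definition zperiodic (S : Type) (Q : nat) (y : zseq S) : Prop :=
  forall i, y (i + Q%:Z)%R = y i.

Lemma zperiodicM (S : Type) Q (y : zseq S) :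
  zperiodic Q y -> forall k i, y (i + k * Q%:Z)%R = y i.
Proof.
move=> yper; have yperN n i : y (i + n%:Z * Q%:Z)%R = y i.
  elim: n i => [|n IH] i; first by rewrite mul0r addr0.
  by rewrite -addn1 PoszD mulrDl mul1r addrA yper IH.
case=> n i; first exact: yperN.
by rewrite -(yperN n.+1) NegzE mulNr addrNK.
Qed.

Lemma zperiodic_finite (S : finType) Q :
  exists n (f : 'I_n -> zseq S), forall y, zperiodic Q.+1 y -> exists i, y = f i.
Proof.
pose T := {ffun 'I_Q.+1 -> S}.
pose ext (g : T) : zseq S := fun k => g (inord `|(k %% Q.+1%:Z)%Z|).
exists #|T|, (fun r => ext (enum_val r)) => y yper.
exists (enum_rank ([ffun t : 'I_Q.+1 => y (Posz t)] : T)).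
rewrite enum_rankK; apply: functional_extensionality => k.
have k_mod_ge0 : (0 <= (k %% Q.+1%:Z)%Z)%R by apply: modz_ge0.
rewrite /ext ffunE inordK; last by rewrite -ltz_nat gez0_abs // ltz_pmod.
by rewrite gez0_abs // {1}(divz_eq k Q.+1%:Z) addrC zperiodicM.
Qed.

Section UniqueExtension.
Variables (S : finType) (X : zseq S -> Prop) (mu : seq S).
Hypotheses (X_irr : irreducible X) (mu_in : inB X mu).
Hypothesis mu_uniq : forall om om',
  size om = size om' -> inB X (mu ++ om) -> inB X (mu ++ om') -> om = om'.

Lemma unique_ext_seq : exists z : nat -> S,
  forall om, inB X (mu ++ om) -> om = mkseq z (size om).
Proof.
have /functional_choice [ext extP] : forall n, exists om, size om = n /\ inB X (mu ++ om).
  by move=> n; have [om] := inB_extr n mu_in; exists om.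
have [a _] : exists a : S, true.
  by case: (ext 1) (proj1 (extP 1)) => [|a _] // _; exists a.
exists (fun j => nth a (ext j.+1) j) => om muom.
apply: (eq_from_nth (x0 := a)) => [|j lt_j]; first by rewrite size_mkseq.
rewrite nth_mkseq // -(nth_take a (ltnSn j)).
have muom_j : inB X (mu ++ take j.+1 om).
  by move: muom; rewrite -{1}(cat_take_drop j.+1 om) catA => /inB_catl.
case: (extP j.+1) => ext_size ext_in.
by rewrite (mu_uniq _ muom_j ext_in) // size_takel.
Qed.

(* Irreducibility returns from the future of [mu] to [mu] itself, which makes the
   unique future [z] of [mu] periodic, and then every point of [X] as well. *)
Lemma unique_ext_zperiodic : exists Q, forall y, X y -> zperiodic Q.+1 y.
Proof.
have [z zE] := unique_ext_seq.
have [a a1 mua_in] := inB_extr 1 mu_in.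
have [v muav_mu] := X_irr mua_in mu_in.
pose Q := size (v ++ mu).
have QE : size (a ++ v ++ mu) = Q.+1 by rewrite size_cat a1.
have zper j : z (Q.+1 + j) = z j.
  have [om omj muavmuom] := inB_extr j.+1 muav_mu.
  have Ez : (a ++ v ++ mu) ++ om = mkseq z (Q.+1 + size om).
    by rewrite -QE -size_cat; apply: zE; move: muavmuom; rewrite -!catA.
  have Ez' : om = mkseq z (size om).
    by apply: zE; move: muavmuom; rewrite -!catA => /inB_catr/inB_catr/inB_catr.
  have := congr1 (nth (z 0) ^~ (Q.+1 + j)) Ez.
  rewrite nth_mkseq; last by rewrite ltn_add2l omj.
  rewrite nth_cat QE ltnNge leq_addr addKn /= => <-.
  by rewrite {1}Ez' nth_mkseq // omj.
exists Q => y Xy i.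
have [v' muv'W] := X_irr mu_in (inB_block i Q.+2 Xy).
have yz t : t <= Q.+1 -> y (i + t%:Z)%R = z (size v' + t).
  move=> le_tQ; have /zE := muv'W; rewrite size_cat size_mkseq => E'.
  have := congr1 (nth (z 0) ^~ (size v' + t)) E'.
  by rewrite /block nth_cat ltnNge leq_addr /= addKn !nth_mkseq ?ltn_add2l ?ltnS // => ->.
by rewrite yz // -(addr0 i) yz // addn0 addnC zper.
Qed.

End UniqueExtension.

Lemma normal_min_presentation_condI (S : finType) (X : zseq S -> Prop)
    (L : lgraph_system S) :
  normal X -> is_min_presentation X L -> condI L.
Proof.
move=> X_normal [c [[c_sim c_onto] _ _ c_edge _]] l v.
have [mu [mu_sync <-]] := c_onto l v.
have [x0 _] := Gamma_inf_nonempty v; pose a0 := x0 0.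
case: (classic (exists om om', [/\ size om = size om', inB X (mu ++ om),
                                   inB X (mu ++ om') & om <> om'])).
  move=> [om [om' [omE muom muom' neq_om]]].
  have [x Gx xE] := normal_Gamma_inf_ext c_sim c_edge a0 X_normal mu_sync muom.
  have [y Gy yE] := normal_Gamma_inf_ext c_sim c_edge a0 X_normal mu_sync muom'.
  exists x, y; split=> // xy; apply: neq_om.
  have : mu ++ om = mu ++ om'.
    apply: (eq_from_nth (x0 := a0)) => [|j]; rewrite !size_cat omE // => lt_j.
    by rewrite -xE ?xy ?yE ?size_cat ?omE.
  by move/(congr1 (drop (size mu))); rewrite !drop_size_cat.
move=> no_branch; have [X_irr X_inf _] := X_normal; case: X_inf.
have [|Q Qper] := @unique_ext_zperiodic _ X mu X_irr (proj1 mu_sync).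
  by move=> om om' omE muom muom'; apply: NNPP => neq_om; apply: no_branch; exists om, om'.
have [n [f fP]] := zperiodic_finite S Q.
by exists n, f => y /Qper /fP.
Qed.

Theorem lemma2p13 (S : finType) (L : lgraph_system S) :
  left_resolving L ->
  let cI := condI L in
  let cII :=
    forall l (v : V L l) (x : nat -> S), Gamma_inf v x ->
    forall m, 0 < m ->
    exists y, [/\ Gamma_inf v y,
                  (forall j, j < m -> x j = y j)
                & exists N, m <= N /\ x N <> y N] in
  let cIII :=
    forall k l, 0 < k -> k <= l ->
    exists y : V L l -> (nat -> S),
      (forall v, Gamma_inf v (y v)) /\
      forall (v w : V L l) (n : nat), 0 < n -> n <= k ->
        iter n (@shift1 S) (y v) <> y w in
  [/\ cI <-> cII, cII -> cIII &
      forall X : zseq S -> Prop, is_subshift X -> normal X ->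
        is_min_presentation X L -> cIII -> cI].
Proof.
move=> _ cI cII cIII.
have II_perfect : cII <-> forall l (v : V L l), perfect (Gamma_inf v).
  by split=> H l v; [apply/perfectP; apply: H | apply/perfectP].
split.
- rewrite II_perfect; split; [exact: condI_perfect | exact: perfect_condI].
- move=> /II_perfect perfG k l _ _.
  have [y [Gy yfree]] :=
    perfect_shift_free (@Gamma_inf_nonempty _ L l) (perfG l) k (enum (V L l)).
  by exists y; split=> // v w n; apply: yfree; rewrite mem_enum.
- by move=> X _ X_normal X_min _; apply: normal_min_presentation_condI X_min.
Qed.
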